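(* For each $t\in\{4,5,6,7\}$ and each $s\in\{1,3,5,7\}$, $P_{2^t}$ divides $Q_{2^t+s}$.
   Context: $Q_q$ denotes the $q$-dimensional hypercube graph (vertices are $q$-tuples of $0$'s and $1$'s, adjacent iff they differ in exactly one coordinate). $P_m$ denotes the path with $m$ edges. For graphs $H$ and $G$, ''$H$ divides $G$'' means there is a collection of subgraphs $H_i$ of $G$, each isomorphic to $H$, such that $E(G)$ is the disjoint union of the edge sets $E(H_i)$. *)

From mathcomp Require Import all_boot.
Set Implicit Arguments. Unset Strict Implicit. Unset Printing Implicit Defensive.

Definition edges (T : finType) (e : rel T) : {set {set T}} :=
  [set [set x; y] | x in T, y in T & e x y].

Definition edge_image (T1 T2 : finType) (f : T1 -> T2) (E : {set {set T1}})
  : {set {set T2}} := [set f @: (A : {set T1}) | A in E].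

(* A copy of H in G = subgraph of G isomorphic to H, presented as the image
   of an injective graph homomorphism f : V(H) -> V(G); its edge set is
   f(E(H)). *)
Definition is_copy (T1 T2 : finType) (eH : rel T1) (eG : rel T2)
  (f : {ffun T1 -> T2}) : Prop :=
  injective f /\ (forall x y, eH x y -> eG (f x) (f y)).

(* H divides G: a collection of copies of H in G whose edge sets partition
   E(G) (every edge of G lies in exactly one copy's edge set). *)
Definition divides (T1 T2 : finType) (eH : rel T1) (eG : rel T2) : Prop :=
  exists s : seq {ffun T1 -> T2},
    (forall f, f \in s -> is_copy eH eG f) /\
    (forall E, E \in edges eG ->
       count (fun f : {ffun T1 -> T2} => E \in edge_image f (edges eH)) s = 1).

Definition cube_rel (q : nat) : rel {ffun 'I_q -> bool} :=
  fun x y => #|[set i | x i != y i]| == 1.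

(* Path P_m with m edges: vertices 0..m, i ~ j iff |i - j| = 1. *)
Definition path_rel (m : nat) : rel 'I_m.+1 :=
  fun i j => (i.+1 == j :> nat) || (j.+1 == i :> nat).
Arguments path_rel m : clear implicits.
Arguments cube_rel q : clear implicits.

From mathcomp Require Import all_boot zify.
Set Implicit Arguments. Unset Strict Implicit. Unset Printing Implicit Defensive.

(* Say that a family of paths of Q_a with k edges, one rooted at each vertex, is a rooted
   decomposition if it partitions the edges and its end points are pairwise distinct.
   Orienting the square Q_2 gives one with k = 1, and rooted decompositions of Q_a and Q_b
   combine into one of Q_(a+b) (run the first one, then the second one from its end point),
   so Q_2k has a rooted decomposition G with paths of length k.

   Let the paths Rs and Ls partition the edges of Q_b, every vertex of Q_b being an end point
   of exactly one R in Rs, each R having m - 2k edges and each L having m edges. In Q_2k x Q_b, run R in the Q_b-fibre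
   over the end of the G-path of a vertex z, preceded by that G-path in the Q_2k-copy through
   the first vertex of R and followed by the G-path of its end in the copy through the last
   vertex of R; copy every L into every fibre. As every vertex of Q_b ends exactly one R, each
   copy of Q_2k sees the whole of G exactly once, so these paths decompose Q_(2k+b) into P_m.

   For b = 9 write Q_9 = Q_8 x K_2 and split Q_8 into four Hamiltonian cycles. Given s = j + j'
   (j <= 4, j' <= 4), the paths Rs follow one step along each of the cycles j, ..., 3 of the
   lower copy of Q_8, the rung to the upper copy, and one step along each of the cycles
   0, ..., 3 - j' there; they have 9 - s edges. The remaining s cycles are cut into paths of
   length m = 2^t, which divides 256. With k = (2^t + s - 9) / 2 this gives the theorem; the
   conditions on Rs and Ls are checked by computation. *)

Section Walks.
Variable T : eqType.
Implicit Types (p q : seq T) (x y : T) (P : seq (T * T)).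

Definition walk_edges p : seq (T * T) := zip p (behead p).
Definition edge_in P x y : bool := ((x, y) \in P) || ((y, x) \in P).
Definition uses_edge p x y : bool := edge_in (walk_edges p) x y.
Definition simple_path (e : rel T) p :=
  uniq p && all (fun c : T * T => e c.1 c.2) (walk_edges p).

Lemma walk_edges_cat x p q :
  walk_edges ((x :: p) ++ q) = walk_edges (x :: p) ++ walk_edges (last x p :: q).
Proof.
elim: p x => [|y p IH] x /=; first by case: q.
by move: (IH y); rewrite /walk_edges /= => ->.
Qed.

Lemma edge_in_cat P1 P2 x y : edge_in (P1 ++ P2) x y = edge_in P1 x y || edge_in P2 x y.
Proof. by rewrite /edge_in !mem_cat -!orbA; do !bool_congr. Qed.

Lemma size_walk_edges p : size (walk_edges p) = (size p).-1.
Proof.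
rewrite /walk_edges size_zip size_behead.
by case: (size p) => //= n; apply: minn_idPr (leqnSn n).
Qed.

Lemma nth_walk_edges x0 p i : i < (size p).-1 ->
  nth (x0, x0) (walk_edges p) i = (nth x0 p i, nth x0 p i.+1).
Proof. by elim: p i => [|x [|y p] IH] [|i] //= hi; rewrite -/(walk_edges _) (IH i). Qed.

Lemma mem_walk_edges x0 p x y : (x, y) \in walk_edges p ->
  exists2 i, i < (size p).-1 & x = nth x0 p i /\ y = nth x0 p i.+1.
Proof.
move/(nthP (x0, x0)) => [i]; rewrite size_walk_edges => hi.
by rewrite nth_walk_edges // => -[<- <-]; exists i.
Qed.

Lemma last_neq_head x p : uniq (x :: p) -> p != [::] -> last x p != x.
Proof.
case: p => //= y p /andP [x_notin _] _.
by apply: contraNneq x_notin => <-; apply: mem_last.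
Qed.

End Walks.

Lemma count_sum (T : Type) (a : pred T) s : count a s = \sum_(x <- s) a x.
Proof. by rewrite -sumn_count sumnE big_map. Qed.

Lemma walk_edges_map (T U : eqType) (f : T -> U) p :
  walk_edges (map f p) = map (fun c : T * T => (f c.1, f c.2)) (walk_edges p).
Proof. by elim: p => [|x [|y p] IH] //=; move: IH; rewrite /walk_edges /= => ->. Qed.

Lemma uses_edge_map_inj (T U : eqType) (f : T -> U) p x y : injective f ->
  uses_edge (map f p) (f x) (f y) = uses_edge p x y.
Proof.
move=> f_inj; rewrite /uses_edge /edge_in walk_edges_map.
have f2_inj : injective (fun c : T * T => (f c.1, f c.2)).
  by move=> [a1 a2] [b1 b2] /= [/f_inj -> /f_inj ->].
by rewrite (mem_map f2_inj _ (x, y)) (mem_map f2_inj _ (y, x)).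
Qed.

Lemma uses_edge_map (T U : eqType) (f : T -> U) p u v :
  uses_edge (map f p) u v -> (exists x, u = f x) /\ (exists y, v = f y).
Proof.
by rewrite /uses_edge /edge_in walk_edges_map => /orP [] /mapP [[c1 c2] _ /= [-> ->]];
  split; eexists.
Qed.

Lemma simple_path_map (T U : eqType) (e1 : rel T) (e2 : rel U) (f : T -> U) p :
  injective f -> (forall c d, e2 (f c) (f d) = e1 c d) ->
  simple_path e2 (map f p) = simple_path e1 p.
Proof.
move=> f_inj fe; rewrite /simple_path map_inj_uniq // walk_edges_map all_map.
by congr andb; apply: eq_all => -[c d] /=; rewrite fe.
Qed.

Lemma sum_inj_eq1 (T : finType) (f : T -> T) (u : T) : injective f ->
  \sum_(x : T) (f x == u) = 1.
Proof.
move=> f_inj; have [g fg gf] := injF_bij f_inj.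
rewrite (bigD1 (g u)) //= gf eqxx big1 // => x nx.
by case: eqP => // ex; case/negP: nx; rewrite -ex fg.
Qed.

Notation bits n := (n.-tuple bool).

Definition hamming (x y : seq bool) : nat := count (fun c : bool * bool => c.1 != c.2) (zip x y).
Definition cube_adj n : rel (bits n) := fun x y => hamming x y == 1.

Lemma hamming_cat x1 x2 y1 y2 : size x1 = size x2 ->
  hamming (x1 ++ y1) (x2 ++ y2) = hamming x1 x2 + hamming y1 y2.
Proof. by move=> h; rewrite /hamming zip_cat // count_cat. Qed.

Lemma hamming_eq0 x y : size x = size y -> (hamming x y == 0) = (x == y).
Proof.
elim: x y => [|a x IH] [|b y] //= [] /IH hs.
by rewrite /hamming /= -/(hamming x y) eqseq_cons -hs; case: a; case: b.
Qed.

Lemma hammingC x y : hamming x y = hamming y x.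
Proof. by elim: x y => [|a x IH] [|b y] //=; rewrite /hamming /= -/(hamming _ _) IH eq_sym. Qed.

Lemma cube_adj_sym n : symmetric (@cube_adj n).
Proof. by move=> x y; rewrite /cube_adj hammingC. Qed.

Lemma cube_adj_irr n (x : bits n) : cube_adj x x = false.
Proof. by rewrite /cube_adj; move: (hamming_eq0 (erefl (size x))); rewrite eqxx => /eqP ->. Qed.

Section Concat.
Variables a b : nat.

Definition catb (x : bits a) (y : bits b) : bits (a + b) := [tuple of x ++ y].
Definition lbits (u : bits (a + b)) : bits a := [tuple tnth u (lshift b i) | i < a].
Definition rbits (u : bits (a + b)) : bits b := [tuple tnth u (rshift a j) | j < b].

Lemma lbits_catb x y : lbits (catb x y) = x.
Proof. by apply: eq_from_tnth => i; rewrite tnth_mktuple tnth_lshift. Qed.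

Lemma rbits_catb x y : rbits (catb x y) = y.
Proof. by apply: eq_from_tnth => i; rewrite tnth_mktuple tnth_rshift. Qed.

Lemma catb_split u : catb (lbits u) (rbits u) = u.
Proof.
apply: eq_from_tnth => k; rewrite -(splitK k); case: (split k) => [i|j] /=.
  by rewrite tnth_lshift tnth_mktuple.
by rewrite tnth_rshift tnth_mktuple.
Qed.

Lemma catb_inj x1 y1 x2 y2 : catb x1 y1 = catb x2 y2 -> x1 = x2 /\ y1 = y2.
Proof.
move=> e; split; first by rewrite -(lbits_catb x1 y1) e lbits_catb.
by rewrite -(rbits_catb x1 y1) e rbits_catb.
Qed.

Lemma catb_injl y : injective (catb^~ y).
Proof. by move=> x1 x2 /catb_inj []. Qed.

Lemma catb_injr x : injective (catb x).
Proof. by move=> y1 y2 /catb_inj []. Qed.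

Lemma cube_adj_catb x1 y1 x2 y2 : cube_adj (catb x1 y1) (catb x2 y2) =
  (cube_adj x1 x2 && (y1 == y2)) || ((x1 == x2) && cube_adj y1 y2).
Proof.
rewrite /cube_adj /= hamming_cat ?size_tuple //.
rewrite -[x1 == x2]/(val x1 == val x2) -[y1 == y2]/(val y1 == val y2).
rewrite -hamming_eq0 ?size_tuple // -hamming_eq0 ?size_tuple //.
by case: (hamming x1 x2) => [|[|?]]; case: (hamming y1 y2) => [|[|?]].
Qed.

Lemma sum_catb (F : bits (a + b) -> nat) :
  \sum_(u : bits (a + b)) F u = \sum_(x : bits a) \sum_(y : bits b) F (catb x y).
Proof.
rewrite pair_big /= (reindex (fun c : bits a * bits b => catb c.1 c.2)) //=.
exists (fun u => (lbits u, rbits u)) => [[x y]|u] _ /=; first by rewrite lbits_catb rbits_catb.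
exact: catb_split.
Qed.

Lemma cube_adj_hcopy y x1 x2 : cube_adj (catb x1 y) (catb x2 y) = cube_adj x1 x2.
Proof. by rewrite cube_adj_catb eqxx cube_adj_irr andbT !andbF orbF. Qed.

Lemma cube_adj_vcopy x y1 y2 : cube_adj (catb x y1) (catb x y2) = cube_adj y1 y2.
Proof. by rewrite cube_adj_catb eqxx cube_adj_irr. Qed.

Lemma simple_path_hcopy y P :
  simple_path (@cube_adj (a + b)) (map (catb^~ y) P) = simple_path (@cube_adj a) P.
Proof. exact: simple_path_map (@catb_injl y) (@cube_adj_hcopy y). Qed.

Lemma simple_path_vcopy x Q :
  simple_path (@cube_adj (a + b)) (map (catb x) Q) = simple_path (@cube_adj b) Q.
Proof. exact: simple_path_map (@catb_injr x) (@cube_adj_vcopy x). Qed.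

Lemma uses_edge_hcopy (P : seq (bits a)) y0 x1 y1 x2 y2 :
  uses_edge (map (catb^~ y0) P) (catb x1 y1) (catb x2 y2) =
  [&& y1 == y0, y2 == y0 & uses_edge P x1 x2].
Proof.
case: (y1 =P y0) => [->|ne]; last first.
  by apply/negP => /uses_edge_map [[x /catb_inj [_ e]] _]; apply: ne.
case: (y2 =P y0) => [->|ne]; last first.
  by apply/negP => /uses_edge_map [_ [x /catb_inj [_ e]]]; apply: ne.
exact: uses_edge_map_inj (@catb_injl y0).
Qed.

Lemma uses_edge_vcopy (Q : seq (bits b)) x0 x1 y1 x2 y2 :
  uses_edge (map (catb x0) Q) (catb x1 y1) (catb x2 y2) =
  [&& x1 == x0, x2 == x0 & uses_edge Q y1 y2].
Proof.
case: (x1 =P x0) => [->|ne]; last first.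
  by apply/negP => /uses_edge_map [[y /catb_inj [e _]] _]; apply: ne.
case: (x2 =P x0) => [->|ne]; last first.
  by apply/negP => /uses_edge_map [_ [y /catb_inj [e _]]]; apply: ne.
exact: uses_edge_map_inj (@catb_injr x0).
Qed.

End Concat.
Arguments catb {a b} x y.
Arguments catb_injl {a b} y.
Arguments catb_injr {a b} x.

(** * Rooted path decompositions of hypercubes *)

(* [z :: G z] is the path of the family rooted at [z]. *)
Definition rooted_decomp a k (G : bits a -> seq (bits a)) :=
  [/\ forall z, size (G z) = k,
      injective (fun z => last z (G z)),
      forall z, simple_path (@cube_adj a) (z :: G z)
    & forall x y, cube_adj x y -> \sum_(z : bits a) uses_edge (z :: G z) x y = 1].

Section RootedProduct.
Variables (a b ka kb : nat) (Ga : bits a -> seq (bits a)) (Gb : bits b -> seq (bits b)).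
Hypotheses (Ha : rooted_decomp ka Ga) (Hb : rooted_decomp kb Gb).

Definition rooted_prod (u : bits (a + b)) : seq (bits (a + b)) :=
  let x := lbits u in let y := rbits u in
  map (catb^~ y) (Ga x) ++ map (catb (last x (Ga x))) (Gb y).

Lemma rooted_prod_catb x y : catb x y :: rooted_prod (catb x y) =
  map (catb^~ y) (x :: Ga x) ++ map (catb (last x (Ga x))) (Gb y).
Proof. by rewrite /rooted_prod lbits_catb rbits_catb. Qed.

Lemma last_rooted_prod x y :
  last (catb x y) (rooted_prod (catb x y)) = catb (last x (Ga x)) (last y (Gb y)).
Proof.
by rewrite /rooted_prod lbits_catb rbits_catb last_cat (last_map (catb^~ y)) (last_map (catb _)).
Qed.

Lemma uses_edge_rooted_prod x y u v :
  uses_edge (catb x y :: rooted_prod (catb x y)) u v =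
  uses_edge (map (catb^~ y) (x :: Ga x)) u v ||
  uses_edge (map (catb (last x (Ga x))) (y :: Gb y)) u v.
Proof.
rewrite /uses_edge rooted_prod_catb [map _ (x :: _)]/= walk_edges_cat.
by rewrite (last_map (catb^~ y)) edge_in_cat.
Qed.

Lemma rooted_prod_simple u : simple_path (@cube_adj (a + b)) (u :: rooted_prod u).
Proof.
case: Ha Hb => _ _ simple_a _ [_ _ simple_b _].
rewrite -(catb_split u); set x := lbits u; set y := rbits u.
have := simple_b y; rewrite -(simple_path_vcopy (a := a) (last x (Ga x))).
have := simple_a x; rewrite -(simple_path_hcopy (b := b) y).
rewrite /simple_path rooted_prod_catb [map _ (x :: _)]/= walk_edges_cat (last_map (catb^~ y)).
rewrite all_cat cat_uniq.
move=> /andP [-> ->] /andP [/= /andP [y_notin_Gb uniq_Gb] ->]; rewrite uniq_Gb !andbT /=.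
apply/hasPn => _ /mapP [y' y'_in ->]; rewrite -[catb x y :: _]/(map (catb^~ y) (x :: Ga x)).
apply/negP => /mapP [x' _ /catb_inj [_ eyy']].
by rewrite eyy' in y'_in; rewrite (map_f _ y'_in) in y_notin_Gb.
Qed.

Lemma rooted_prod_cover_h x1 x2 y1 : cube_adj x1 x2 ->
  \sum_u uses_edge (u :: rooted_prod u) (catb x1 y1) (catb x2 y1) = 1.
Proof.
case: Ha => _ _ _ cover_a x1x2.
have nx : x2 != x1 by apply: contraTneq x1x2 => ->; rewrite cube_adj_irr.
rewrite sum_catb -(cover_a _ _ x1x2); apply: eq_bigr => x _.
transitivity (\sum_y ((y1 == y) && uses_edge (x :: Ga x) x1 x2 : nat)).
  apply: eq_bigr => y _; rewrite uses_edge_rooted_prod uses_edge_hcopy uses_edge_vcopy andbA andbb.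
  by case: (x1 =P _) => [<-|//]; case: (x2 =P x1) nx => [->|_ _]; rewrite ?eqxx //= orbF.
rewrite (bigD1 y1) //= eqxx big1 ?addn0 // => y ny.
by rewrite eq_sym (negbTE ny).
Qed.

Lemma rooted_prod_cover_v x1 y1 y2 : cube_adj y1 y2 ->
  \sum_u uses_edge (u :: rooted_prod u) (catb x1 y1) (catb x1 y2) = 1.
Proof.
case: Ha Hb => _ end_inj _ _ [_ _ _ cover_b] y1y2.
have ny : y2 != y1 by apply: contraTneq y1y2 => ->; rewrite cube_adj_irr.
rewrite sum_catb -(sum_inj_eq1 x1 end_inj); apply: eq_bigr => x _.
transitivity (\sum_y ((last x (Ga x) == x1) && uses_edge (y :: Gb y) y1 y2 : nat)).
  apply: eq_bigr => y _; rewrite uses_edge_rooted_prod uses_edge_hcopy uses_edge_vcopy.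
  rewrite !andbA andbb orbC (eq_sym x1).
  by case: (y1 =P y) => [<-|//]; case: (y2 =P y1) ny => [->|_ _]; rewrite ?eqxx //= orbF.
by case: (_ == x1) => /=; [exact: cover_b | rewrite big1].
Qed.

Lemma rooted_decomp_prod : rooted_decomp (ka + kb) rooted_prod.
Proof.
case: Ha Hb => size_a end_a _ _ [size_b end_b _ _].
split.
- by move=> u; rewrite /rooted_prod size_cat !size_map size_a size_b.
- move=> u v; rewrite -(catb_split u) -(catb_split v) /= !last_rooted_prod.
  by move=> /catb_inj [/end_a -> /end_b ->].
- exact: rooted_prod_simple.
- move=> u v; rewrite -(catb_split u) -(catb_split v) cube_adj_catb.
  case/orP => /andP []; first by move=> adj /eqP <-; apply: rooted_prod_cover_h.
  by move=> /eqP <-; apply: rooted_prod_cover_v.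
Qed.

End RootedProduct.

Lemma rooted_decomp0 : rooted_decomp 0 (fun _ : bits 0 => [::]).
Proof. by split=> // x y; rewrite (tuple0 x) (tuple0 y) cube_adj_irr. Qed.

(* Orienting the 4-cycle Q_2, every vertex roots the edge to its successor. *)
Definition rot2 (z : bits 2) : bits 2 := [tuple ~~ tnth z (inord 1); tnth z (inord 0)].

Lemma bits2E (z : bits 2) : z = [tuple tnth z (inord 0); tnth z (inord 1)].
Proof.
apply: eq_from_tnth => -[[|[|i]] hi] //=;
  by rewrite [in RHS](tnth_nth false) /=; congr tnth; apply: val_inj; rewrite /= inordK.
Qed.

Lemma rooted_decomp_square : rooted_decomp 1 (fun z : bits 2 => [:: rot2 z]).
Proof.
split=> //.
- move=> z1 z2 /= e; rewrite (bits2E z1) (bits2E z2).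
  have := congr1 (fun t : bits 2 => tnth t (inord 0)) e.
  have := congr1 (fun t : bits 2 => tnth t (inord 1)) e.
  by rewrite /rot2 !(tnth_nth false) /= !inordK //= => -> /(congr1 negb); rewrite !negbK => ->.
- move=> z; rewrite (bits2E z) /simple_path /rot2 !(tnth_nth false) /= !inordK //=.
  by case: (nth false z 0); case: (nth false z 1).
move=> x y; rewrite (bits2E x) (bits2E y) !(tnth_nth false) /= !inordK //=.
set a := nth false x 0; set b := nth false x 1; set c := nth false y 0; set d := nth false y 1.
move=> adj.
have -> : \sum_(z : bits 2) uses_edge [:: z; rot2 z] [tuple a; b] [tuple c; d] =
    \sum_(z : bits 2) ((z == [tuple a; b]) && (rot2 z == [tuple c; d]) : nat)
  + \sum_(z : bits 2) ((z == [tuple c; d]) && (rot2 z == [tuple a; b]) : nat).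
  rewrite -big_split /=; apply: eq_bigr => z _.
  rewrite /uses_edge /edge_in /= !inE !xpair_eqE.
  rewrite [[tuple a; b] == z]eq_sym [[tuple c; d] == z]eq_sym.
  rewrite [[tuple c; d] == rot2 z]eq_sym [[tuple a; b] == rot2 z]eq_sym.
  case: (z =P [tuple a; b]) => [e1|_]; case: (z =P [tuple c; d]) => [e2|_] //=.
  - by move: adj; rewrite -e1 -e2 cube_adj_irr.
  - by rewrite orbF addn0.
rewrite (bigD1 [tuple a; b]) //= (eqxx [tuple a; b]) big1 => [|z /negbTE -> //].
rewrite (bigD1 [tuple c; d]) //= (eqxx [tuple c; d]) big1 => [|z /negbTE -> //].
move: adj; rewrite /rot2 !(tnth_nth false) /= !inordK //=.
by case: a; case: b; case: c; case: d.
Qed.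

Lemma rooted_decomp_exists k : exists G : bits k.*2 -> seq (bits k.*2), rooted_decomp k G.
Proof.
elim: k => [|k [G HG]]; first by exists (fun _ => [::]); exact: rooted_decomp0.
exists (rooted_prod (fun z : bits 2 => [:: rot2 z]) G).
exact: rooted_decomp_prod rooted_decomp_square HG.
Qed.

(** * Lifting a path decomposition of Q_b to Q_(a+b) *)

Lemma count_allpairs_enum (T : finType) (U V : eqType) (P : pred V) (f : T -> U -> V) s :
  count P [seq f z R | z <- enum T, R <- s] = \sum_(z : T) \sum_(R <- s) P (f z R).
Proof.
rewrite count_flatten -map_comp sumnE big_map big_enum /=; apply: eq_bigr => z _.
by rewrite count_map count_sum.
Qed.

Section Lifting.
Variables (a b k m : nat) (G : bits a -> seq (bits a)) (Rs Ls : seq (seq (bits b))).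
Hypotheses (HG : rooted_decomp k G)
  (simple_RL : forall p, p \in Rs ++ Ls -> simple_path (@cube_adj b) p)
  (cover_RL : forall x y, cube_adj x y -> count (fun p => uses_edge p x y) (Rs ++ Ls) = 1)
  (size_R : forall R, R \in Rs -> size R + k.*2 = m.+1 /\ 1 < size R)
  (ends_R : forall y,
     count (fun R => head y R == y) Rs + count (fun R => last y R == y) Rs = 1)
  (size_L : forall L, L \in Ls -> size L = m.+1).

Definition rooted_end z := last z (G z).

Lemma rooted_end_inj : injective rooted_end.
Proof. by case: HG. Qed.

Definition lift_path z (R : seq (bits b)) : seq (bits (a + b)) :=
  if R is r0 :: R' then
    map (catb^~ r0) (z :: G z) ++ map (catb (rooted_end z)) R' ++
    map (catb^~ (last r0 R')) (G (rooted_end z))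
  else [::].

Definition lifted_paths :=
  [seq lift_path z R | z <- enum {: bits a}, R <- Rs] ++
  [seq map (catb x) L | x <- enum {: bits a}, L <- Ls].

Lemma lift_path_cons z r0 R' : lift_path z (r0 :: R') =
  map (catb^~ r0) (z :: G z) ++ map (catb (rooted_end z)) R' ++
  map (catb^~ (last r0 R')) (G (rooted_end z)).
Proof. by []. Qed.

Lemma walk_edges_lift_path z r0 R' :
  walk_edges (lift_path z (r0 :: R')) =
  walk_edges (map (catb^~ r0) (z :: G z)) ++
  walk_edges (map (catb (rooted_end z)) (r0 :: R')) ++
  walk_edges (map (catb^~ (last r0 R')) (rooted_end z :: G (rooted_end z))).
Proof.
rewrite /lift_path /= -cat_cons walk_edges_cat (last_map (catb^~ r0)) -/(rooted_end z).
by rewrite -cat_cons walk_edges_cat (last_map (catb (rooted_end z))).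
Qed.

Lemma uses_edge_lift_path z r0 R' u v :
  uses_edge (lift_path z (r0 :: R')) u v =
  [|| uses_edge (map (catb^~ r0) (z :: G z)) u v,
      uses_edge (map (catb (rooted_end z)) (r0 :: R')) u v
    | uses_edge (map (catb^~ (last r0 R')) (rooted_end z :: G (rooted_end z))) u v].
Proof. by rewrite /uses_edge walk_edges_lift_path !edge_in_cat. Qed.

Lemma size_lifted_paths p : p \in lifted_paths -> size p = m.+1.
Proof.
rewrite mem_cat => /orP [] /allpairsP [[z R] /= [_ R_in ->]]; last by rewrite size_map size_L.
case: (size_R R_in) => <-; case: R {R_in} => //= r0 R' _.
case: HG => size_G _ _ _; rewrite !size_cat !size_map !size_G /= -addnn; lia.
Qed.

Lemma lift_path_simple z R : simple_path (@cube_adj b) R -> 1 < size R ->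
  simple_path (@cube_adj (a + b)) (lift_path z R).
Proof.
case: HG => _ _ simple_G _; case: R => // r0 R' simple_R R'_gt0.
have [r0_notin_R' uniq_R'] : r0 \notin R' /\ uniq R' by move: simple_R => /andP [/= /andP []].
have last_neq_r0 : last r0 R' != r0.
  by apply: last_neq_head; [case/andP: simple_R | case: R' R'_gt0 {simple_R r0_notin_R' uniq_R'}].
have [end_notin_G uniq_G] : rooted_end z \notin G (rooted_end z) /\ uniq (G (rooted_end z)).
  by move: (simple_G (rooted_end z)) => /andP [/= /andP []].
move: (simple_G (rooted_end z)); rewrite -(simple_path_hcopy (b := b) (last r0 R')).
move: simple_R; rewrite -(simple_path_vcopy (a := a) (rooted_end z)).
move: (simple_G z); rewrite -(simple_path_hcopy (b := b) r0).
rewrite /simple_path walk_edges_lift_path !all_cat.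
move=> /andP [uniq1 ->] /andP [_ ->] /andP [_ ->].
rewrite lift_path_cons cat_uniq uniq1 cat_uniq (map_inj_uniq (catb_injr _)) uniq_R'.
rewrite (map_inj_uniq (catb_injl _)) uniq_G !andTb !andbT; apply/andP; split.
  apply/hasPn => w; rewrite mem_cat => /orP [] /mapP [w' w'_in ->]; apply/negP;
    move=> /mapP [x' _ /catb_inj [_ e]].
    by move: r0_notin_R'; rewrite -e w'_in.
  by move: last_neq_r0; rewrite e eqxx.
apply/hasPn => w /mapP [w' w'_in ->]; apply/negP => /mapP [y' _ /catb_inj [e _]].
by move: w'_in; rewrite e (negbTE end_notin_G).
Qed.

Lemma lifted_paths_simple p : p \in lifted_paths -> simple_path (@cube_adj (a + b)) p.
Proof.
rewrite mem_cat => /orP [] /allpairsP [[z R] /= [_ R_in ->]].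
  by apply: lift_path_simple; [apply: simple_RL; rewrite mem_cat R_in | case: (size_R R_in)].
by rewrite simple_path_vcopy; apply: simple_RL; rewrite mem_cat R_in orbT.
Qed.

Lemma lift_path_cover_h z y1 x1 x2 (nx : x2 != x1) R (R_in : R \in Rs) :
  uses_edge (lift_path z R) (catb x1 y1) (catb x2 y1) =
  (head y1 R == y1) * uses_edge (z :: G z) x1 x2
  + (last y1 R == y1) * uses_edge (rooted_end z :: G (rooted_end z)) x1 x2 :> nat.
Proof.
have simple_R : simple_path (@cube_adj b) R by apply: simple_RL; rewrite mem_cat R_in.
case: (size_R R_in) => _; case: R {R_in} simple_R => // r0 R' /andP [uniq_R _] R'_gt0.
have last_neq_r0 : last r0 R' != r0 by apply: last_neq_head => //; case: R' R'_gt0 {uniq_R}.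
rewrite uses_edge_lift_path uses_edge_hcopy uses_edge_vcopy uses_edge_hcopy /= !andbA !andbb.
have -> : (x1 == rooted_end z) && (x2 == rooted_end z) = false.
  by case: (x1 =P _) => //= <-; case: (x2 =P x1) nx => // ->.
rewrite /= [r0 == y1]eq_sym [last r0 R' == y1]eq_sym.
case: (y1 =P r0) => [er|nr] /=; case: (y1 =P last r0 R') => [el|nl] //=.
- by move: last_neq_r0; rewrite -el -er eqxx.
- by rewrite orbF mul1n mul0n addn0.
- by rewrite mul0n add0n mul1n.
Qed.

Lemma lifted_paths_cover_h x1 x2 y1 : cube_adj x1 x2 ->
  count (fun p => uses_edge p (catb x1 y1) (catb x2 y1)) lifted_paths = 1.
Proof.
case: HG => _ _ _ cover_G x1x2.
have nx : x2 != x1 by apply: contraTneq x1x2 => ->; rewrite cube_adj_irr.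
rewrite count_cat !count_allpairs_enum [X in _ + X]big1 ?addn0 => [|x _]; last first.
  rewrite big1_seq // => L _; rewrite uses_edge_vcopy.
  by case: (x1 =P x) => //= <-; case: (x2 =P x1) nx => // ->.
under eq_bigr => z _ do rewrite (eq_big_seq _ (lift_path_cover_h z y1 nx)).
rewrite exchange_big /=.
have sum_G : \sum_z uses_edge (z :: G z) x1 x2 = 1 by apply: cover_G.
have sum_Gend : \sum_z uses_edge (rooted_end z :: G (rooted_end z)) x1 x2 = 1.
  by rewrite -sum_G [RHS](reindex_inj rooted_end_inj).
under eq_bigr => R _ do rewrite big_split /= -!big_distrr /= sum_G sum_Gend !muln1.
by rewrite big_split /= -!count_sum; apply: ends_R.
Qed.

Lemma lift_path_cover_v z x1 y1 y2 (ny : y2 != y1) R :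
  uses_edge (lift_path z R) (catb x1 y1) (catb x1 y2) =
  (rooted_end z == x1) * uses_edge R y1 y2 :> nat.
Proof.
case: R => [|r0 R']; first by rewrite muln0.
rewrite uses_edge_lift_path uses_edge_hcopy uses_edge_vcopy uses_edge_hcopy /=.
have no_h y0 P : [&& y1 == y0, y2 == y0 & uses_edge P x1 x1] = false.
  by case: (y1 =P _) => //= <-; case: (y2 =P y1) ny => // ->.
by rewrite !no_h /= orbF andbA andbb eq_sym; case: (_ == _); case: (uses_edge _ _ _).
Qed.

Lemma lifted_paths_cover_v x1 y1 y2 : cube_adj y1 y2 ->
  count (fun p => uses_edge p (catb x1 y1) (catb x1 y2)) lifted_paths = 1.
Proof.
move=> y1y2; have ny : y2 != y1 by apply: contraTneq y1y2 => ->; rewrite cube_adj_irr.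
rewrite count_cat !count_allpairs_enum.
under eq_bigr => z _ do rewrite (eq_bigr _ (fun R _ => lift_path_cover_v z x1 ny R)).
have sum_L : \sum_x \sum_(L <- Ls) uses_edge (map (catb x) L) (catb x1 y1) (catb x1 y2) =
    \sum_(L <- Ls) uses_edge L y1 y2.
  rewrite exchange_big /=; apply: eq_bigr => L _.
  rewrite (bigD1 x1) //= uses_edge_vcopy !eqxx /= big1 ?addn0 // => x nx.
  by rewrite uses_edge_vcopy eq_sym (negbTE nx).
rewrite sum_L exchange_big /=.
under eq_bigr => R _ do rewrite -big_distrl /= (sum_inj_eq1 _ rooted_end_inj) mul1n.
by rewrite -!count_sum -count_cat; apply: cover_RL.
Qed.

Lemma lifted_paths_cover u v : cube_adj u v ->
  count (fun p => uses_edge p u v) lifted_paths = 1.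
Proof.
rewrite -(catb_split u) -(catb_split v) cube_adj_catb.
case/orP => /andP []; first by move=> adj /eqP <-; apply: lifted_paths_cover_h.
by move=> /eqP <-; apply: lifted_paths_cover_v.
Qed.

End Lifting.

Section BitsAsFfun.
Variable n : nat.

Definition ffun_of_bits (w : bits n) : {ffun 'I_n -> bool} := [ffun i => tnth w i].
Definition bits_of_ffun (f : {ffun 'I_n -> bool}) : bits n := [tuple f i | i < n].

Lemma bits_of_ffunK : cancel bits_of_ffun ffun_of_bits.
Proof. by move=> f; apply/ffunP => i; rewrite !ffunE tnth_mktuple. Qed.

Lemma ffun_of_bits_inj : injective ffun_of_bits.
Proof. by move=> x y /ffunP e; apply: eq_from_tnth => i; move: (e i); rewrite !ffunE. Qed.

Lemma cube_rel_ffun_of_bits x y : cube_rel n (ffun_of_bits x) (ffun_of_bits y) = cube_adj x y.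
Proof.
rewrite /cube_rel /cube_adj /hamming -(map_tnth_enum x) -(map_tnth_enum y) zip_map count_map.
rewrite count_sum big_enum /= -sum1_card big_mkcond /=.
by congr (_ == 1); apply: eq_bigr => i _; rewrite inE !ffunE; case: (_ != _).
Qed.

End BitsAsFfun.

Lemma eq_set2 (T : finType) (a b c d : T) : [set a; b] = [set c; d] ->
  (a = c /\ b = d) \/ (a = d /\ b = c).
Proof.
move=> E.
have /set2P ha : a \in [set c; d] by rewrite -E set21.
have /set2P hb : b \in [set c; d] by rewrite -E set22.
have /set2P hc : c \in [set a; b] by rewrite E set21.
have /set2P hd : d \in [set a; b] by rewrite E set22.
by case: ha hb hc hd => -> [] -> [] ? [] ?; subst; auto.
Qed.

Section PathCopies.
Variables n m : nat.

Definition path_copy (p : seq (bits n)) : {ffun 'I_m.+1 -> {ffun 'I_n -> bool}} :=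
  [ffun i : 'I_m.+1 => ffun_of_bits (nth [tuple of nseq n false] p i)].

Lemma walk_edges_nth p (i j : 'I_m.+1) : size p = m.+1 -> i.+1 = j ->
  (nth [tuple of nseq n false] p i, nth [tuple of nseq n false] p j) \in walk_edges p.
Proof.
move=> size_p ij; have i_lt_m : i < m by rewrite -ltnS ij ltn_ord.
by rewrite -ij -nth_walk_edges ?size_p //; apply: mem_nth; rewrite size_walk_edges size_p.
Qed.

Lemma edge_image_path_copy p x y : size p = m.+1 ->
  ([set ffun_of_bits x; ffun_of_bits y] \in edge_image (path_copy p) (edges (path_rel m))) =
  uses_edge p x y.
Proof.
move=> size_p; apply/idP/idP.
- case/imsetP => A /imset2P [i j _]; rewrite inE /path_rel => ij -> {A}.
  rewrite imsetU1 imset_set1 !ffunE.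
  by case/eq_set2 => -[/ffun_of_bits_inj -> /ffun_of_bits_inj ->]; rewrite /uses_edge /edge_in;
    case/orP: ij => /eqP /(walk_edges_nth size_p) ->; rewrite ?orbT.
- have edge_walk u v : (u, v) \in walk_edges p ->
      [set ffun_of_bits u; ffun_of_bits v] \in edge_image (path_copy p) (edges (path_rel m)).
    move=> /(mem_walk_edges [tuple of nseq n false]) [i]; rewrite size_p /= => i_lt [-> ->].
    have i_le : i < m.+1 by apply: ltnW.
    apply/imsetP; exists [set Ordinal i_le; Ordinal (i_lt : i.+1 < m.+1)].
      apply/imset2P; exists (Ordinal i_le) (Ordinal (i_lt : i.+1 < m.+1)) => //.
      by rewrite inE /path_rel /= eqxx.
    by rewrite imsetU1 imset_set1 !ffunE.
  by case/orP => /edge_walk //; rewrite setUC.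
Qed.

Lemma divides_of_path_cover (S : seq (seq (bits n))) :
  (forall p, p \in S -> simple_path (@cube_adj n) p) ->
  (forall x y, cube_adj x y -> count (fun p => uses_edge p x y) S = 1) ->
  (forall p, p \in S -> size p = m.+1) ->
  divides (path_rel m) (cube_rel n).
Proof.
move=> simple_S cover_S size_S; exists (map path_copy S); split.
- move=> _ /mapP [p p_in ->]; have /andP [uniq_p adj_p] := simple_S p p_in.
  have size_p := size_S p p_in; split.
  + move=> i j; rewrite !ffunE => /ffun_of_bits_inj /eqP.
    by rewrite nth_uniq ?size_p // => /eqP /val_inj.
  + move=> i j; rewrite !ffunE cube_rel_ffun_of_bits /path_rel.
    by case/orP => /eqP /(walk_edges_nth size_p) /(allP adj_p) //; rewrite cube_adj_sym.
- move=> E /imset2P [x y _]; rewrite inE => xy -> {E}.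
  rewrite -(bits_of_ffunK x) -(bits_of_ffunK y) cube_rel_ffun_of_bits in xy *.
  rewrite count_map -(cover_S _ _ xy); apply: eq_in_count => p p_in /=.
  by rewrite edge_image_path_copy // size_S.
Qed.

End PathCopies.

Fixpoint all_bits n : seq (seq bool) :=
  if n is n'.+1 then [seq c :: w | c <- [:: false; true], w <- all_bits n'] else [:: [::]].

Lemma mem_all_bits n (w : seq bool) : size w = n -> w \in all_bits n.
Proof.
elim: n w => [|n IH] [|c w] // [] /IH w_in.
by apply/allpairsP; exists (c, w); split => //; case: c.
Qed.

Fixpoint flips (x : seq bool) : seq (seq bool) :=
  if x is c :: x' then (~~ c :: x') :: [seq c :: w | w <- flips x'] else [::].

Lemma mem_flips x y : size x = size y -> hamming x y = 1 -> y \in flips x.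
Proof.
elim: x y => [|c x IH] [|d y] //= [] size_xy; rewrite /hamming /= -/(hamming x y).
case: (c =P d) => [<- /= /(IH _ size_xy) y_in | /eqP cd /= [] /eqP].
  by rewrite inE map_f ?orbT.
rewrite (hamming_eq0 size_xy) => /eqP <-.
by rewrite inE eqseq_cons eqxx andbT; case: c d cd => -[].
Qed.

(* [eqb_bits] and [edge_inb] compute [==] and [edge_in] on bit sequences without going
   through the [eqType] structure, which makes their evaluation by the kernel much faster. *)
Fixpoint eqb_bits (x y : seq bool) : bool :=
  match x, y with
  | [::], [::] => true
  | c :: x', d :: y' => (if c then d else ~~ d) && eqb_bits x' y'
  | _, _ => false
  end.

Lemma eqb_bitsE x y : eqb_bits x y = (x == y).
Proof. by elim: x y => [|c x IH] [|d y] //=; rewrite eqseq_cons IH; case: c; case: d. Qed.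

Definition touches (x : seq bool) (c : seq bool * seq bool) := eqb_bits c.1 x || eqb_bits c.2 x.

Definition edge_inb (E : seq (seq bool * seq bool)) x y :=
  has (fun c => eqb_bits c.1 x && eqb_bits c.2 y || eqb_bits c.1 y && eqb_bits c.2 x) E.

Lemma edge_inbE E x y : edge_inb E x y = edge_in E x y.
Proof.
rewrite /edge_in; elim: E => //= -[c d] E ->; rewrite !inE !eqb_bitsE !xpair_eqE.
by rewrite ![_ == c]eq_sym ![_ == d]eq_sym -!orbA; do !bool_congr.
Qed.

(* Filtering the edges at [x] first does not change the counts but speeds up evaluation. *)
Definition path_cover_check n (S : seq (seq (seq bool))) :=
  all (fun p => uniq p && all (fun c => hamming c.1 c.2 == 1) (walk_edges p)) S &&
  all (fun x => let Ex := [seq filter (touches x) (walk_edges p) | p <- S] in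
         all (fun y => count (fun E => edge_inb E x y) Ex == 1) (flips x))
    (all_bits n).

Lemma path_cover_checkP n (S : seq (seq (bits n))) :
  path_cover_check n (map (map val) S) ->
  (forall p, p \in S -> simple_path (@cube_adj n) p) /\
  (forall x y, cube_adj x y -> count (fun p => uses_edge p x y) S = 1).
Proof.
case/andP => /allP simple_S /allP cover_S; split.
- move=> p p_in; have /andP [uniq_p adj_p] := simple_S _ (map_f _ p_in).
  rewrite /simple_path -(map_inj_uniq val_inj) uniq_p /=.
  by move: adj_p; rewrite walk_edges_map all_map.
- move=> x y xy.
  have y_flip : val y \in flips x by apply: mem_flips; rewrite ?size_tuple // (eqP xy).
  have /allP /(_ _ y_flip) := cover_S _ (mem_all_bits (size_tuple x)).
  rewrite -map_comp !count_map => /eqP <-; apply: eq_count => p /=.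
  rewrite edge_inbE /edge_in !mem_filter /touches /= !eqb_bitsE !eqxx orbT /=.
  rewrite -/(edge_in _ (val x) (val y)).
  by rewrite -(uses_edge_map_inj _ _ _ val_inj).
Qed.

Definition ends_check n (R : seq (seq (seq bool))) :=
  all (fun w => count (fun r => head [::] r == w) R + count (fun r => last [::] r == w) R == 1)
    (all_bits n).

Lemma ends_checkP n (Rs : seq (seq (bits n))) : all (fun R => 0 < size R) Rs ->
  ends_check n (map (map val) Rs) ->
  forall y, count (fun R => head y R == y) Rs + count (fun R => last y R == y) Rs = 1.
Proof.
move=> /allP Rs_gt0 /allP ends y; have := ends _ (mem_all_bits (size_tuple y)).
rewrite !count_map => /eqP <-; congr addn; apply: eq_in_count => -[|r R] /Rs_gt0 //= _.
by rewrite (last_map val).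
Qed.

Lemma divides_path_cube_of_check k m b (Rs Ls : seq (seq (bits b))) :
  path_cover_check b (map (map val) (Rs ++ Ls)) -> ends_check b (map (map val) Rs) ->
  all (fun R => (size R + k.*2 == m.+1) && (1 < size R)) Rs ->
  all (fun L => size L == m.+1) Ls ->
  divides (path_rel m) (cube_rel (k.*2 + b)).
Proof.
move=> /path_cover_checkP [simple_RL cover_RL] ends /allP size_R /allP size_L.
have [G HG] := rooted_decomp_exists k.
have size_R' R : R \in Rs -> size R + k.*2 = m.+1 /\ 1 < size R.
  by move=> /size_R /andP [/eqP -> ->].
have ends_R := ends_checkP (introT allP (fun R R_in => ltnW (proj2 (size_R' R R_in)))) ends.
apply: (divides_of_path_cover (S := lifted_paths G Rs Ls)).
- exact: lifted_paths_simple HG simple_RL size_R'.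
- exact: lifted_paths_cover HG simple_RL cover_RL size_R' ends_R.
- exact: size_lifted_paths HG size_R' (fun L L_in => eqP (size_L L L_in)).
Qed.

(** * A decomposition of Q_9 *)

Definition pad n (w : seq bool) := take n (w ++ nseq n false).

Lemma size_pad n w : size (pad n w) == n.
Proof. by rewrite size_takel // size_cat size_nseq leq_addl. Qed.

Definition bits_of_seq n w : bits n := Tuple (size_pad n w).

(* With u, v at positions x, y of the cycle H of length n, the out-edge of colour [c] at
   (u, v) in the torus H x H moves u exactly when [c] says whether x + y = 0 mod n; both
   colour classes are Hamiltonian cycles. Applied to Q_4 = C_4 x C_4 and then to H x H in
   Q_8 = Q_4 x Q_4, for each of the two Hamiltonian cycles H of Q_4, this yields four
   Hamiltonian cycles partitioning Q_8. None of this is proved: [certified_all] checks the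
   resulting paths directly. *)
Definition torus_step d (H : seq (seq bool)) (c : bool) (w : seq bool) : seq bool :=
  let n := size H in let u := take d w in let v := drop d w in
  let x := index u H in let y := index v H in
  if c == ((x + y) %% n == 0) then nth u H (x.+1 %% n) ++ v else u ++ nth v H (y.+1 %% n).

Definition ham4 c :=
  let square := [:: [:: false; false]; [:: true; false]; [:: true; true]; [:: false; true]] in
  traject (torus_step 2 square c) (nseq 4 false) 16.

Definition ham8_step i := torus_step 4 (ham4 (1 < i)) (odd i).

Definition ladder w := w :: scanl (fun u i => ham8_step i u) w (iota 0 4).

(* [rcons u false] and [rcons u true] are the copies of u in the two copies of Q_8 in Q_9. *)
Definition rung_path s w :=
  let j := minn s 4 in
  [seq rcons u false | u <- drop j (ladder w)] ++
  [seq rcons u true | u <- take (5 - (s - j)) (ladder (last w (ladder w)))].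

Definition cycle_pieces m i :=
  let c := traject (ham8_step i) (nseq 8 false) 257 in
  [seq take m.+1 (drop (q * m) c) | q <- iota 0 (256 %/ m)].

Definition rung_paths s : seq (seq (bits 9)) :=
  [seq map (bits_of_seq 9) (rung_path s w) | w <- all_bits 8].

Definition cycle_paths s m : seq (seq (bits 9)) :=
  let j := minn s 4 in
  [seq [seq bits_of_seq 9 (rcons u false) | u <- p] | i <- iota 0 j, p <- cycle_pieces m i] ++
  [seq [seq bits_of_seq 9 (rcons u true) | u <- p]
    | i <- iota (4 - (s - j)) (s - j), p <- cycle_pieces m i].

Definition certified m s :=
  let k := (m + s - 9)./2 in
  let Rs := rung_paths s in let Ls := cycle_paths s m in
  [&& m + s == k.*2 + 9,
      path_cover_check 9 (map (map val) (Rs ++ Ls)), ends_check 9 (map (map val) Rs),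
      all (fun R => (size R + k.*2 == m.+1) && (1 < size R)) Rs
    & all (fun L => size L == m.+1) Ls].

Lemma certified_all : all (fun m => all (certified m) [:: 1; 3; 5; 7]) [:: 16; 32; 64; 128].
Proof. by vm_compute. Qed.

Lemma divides_of_certified m s : certified m s -> divides (path_rel m) (cube_rel (m + s)).
Proof.
case/and5P => /eqP dim pc ends size_R size_L.
by rewrite dim; apply: divides_path_cube_of_check pc ends size_R size_L.
Qed.

Theorem lemma10 (t s : nat) :
  t \in [:: 4; 5; 6; 7] -> s \in [:: 1; 3; 5; 7] ->
  divides (path_rel (2 ^ t)) (cube_rel (2 ^ t + s)).
Proof.
move=> t_in s_in; apply: divides_of_certified.
have /allP cert := certified_all; apply: (allP (cert _ _)) s_in.
by rewrite !inE in t_in *; case/or4P: t_in => /eqP ->.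
Qed.
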